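(* Let $\epsilon\ge0$. Let $Z$ be a feasible point of the SDP relaxation described in the context, with first-row data $(z_+,z_-,\rho)$, and let $(x_+^{Q},x_-^{Q},r^{Q})$ be its reconstruction, i.e. $x_\pm^{Q}=z_\pm$ and $r^{Q}=\max\{r\in[0,1]: (A_\delta z_+ + A_\delta z_- + b_\delta)\,r + A_c z_+ - A_c z_- - b_c\le 0\}$. If $(x_+^{Q},x_-^{Q})$ is weakly $\epsilon$-efficient for the LP of robustness level $r^{Q}$, then $(x_+^{Q},x_-^{Q},r^{Q})$ is weakly $\epsilon$-efficient for the QCQP.
   Context: Let $k,m,n\in\mathbb{N}$. Let $A_c,A_\delta\in\mathbb{R}^{m\times n}$ with $A_\delta\ge 0$ entrywise, $b_c,b_\delta\in\mathbb{R}^m$ with $b_\delta\ge0$, $G\in\mathbb{R}^{k\times n}$, and $\ell,u\in\mathbb{R}^n$ with $\ell\le u$. All vector inequalities are componentwise. QCQP: variables $x_+,x_-\in\mathbb{R}^n_{\ge0}$, $r\in[0,1]$, subject to $A_cx_+-A_cx_-+rA_\delta x_++rA_\delta x_-+rb_\delta-b_c\le0$ and $\ell\le x_+-x_-\le u$; vector objective $F(x_+,x_-,r)=(G(x_+-x_-),-r)\in\mathbb{R}^{k+1}$, minimized in the Pareto sense. LP of robustness level $r$ (for fixed $r\in[0,1]$): variables $x_+,x_-\in\mathbb{R}^n_{\ge0}$, subject to $(A_c+rA_\delta)x_+-(A_c-rA_\delta)x_-\le b_c-rb_\delta$ and $\ell\le x_+-x_-\le u$; vector objective $G(x_+-x_-)\in\mathbb{R}^k$,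 minimized in the Pareto sense. SDP relaxation: variable a symmetric positive semidefinite matrix $Z$ of size $(2n+2)\times(2n+2)$ written in block form with row/column blocks of sizes $1,n,n,1$: $Z=\begin{pmatrix} Z_{00} & z_+^T & z_-^T & \rho\\ z_+ & * & * & w_+\\ z_- & * & * & w_-\\ \rho & w_+^T & w_-^T & \sigma\end{pmatrix}$, with $z_\pm,w_\pm\in\mathbb{R}^n$, $\rho,\sigma\in\mathbb{R}$. Constraints: $Z_{00}=1$; $A_cz_+-A_cz_-+A_\delta(w_++w_-)+\rho\, b_\delta-b_c\le0$; $\ell\le z_+-z_-\le u$; $z_+,z_-\ge0$, $\rho\ge0$, $w_+,w_-\ge0$; $\sigma\le1$. Vector objective $(G(z_+-z_-),-\rho)\in\mathbb{R}^{k+1}$, minimized in the Pareto sense. Efficiency (for minimizing a vector function $f$ over a feasible set $\mathcal{X}$): $x^*\in\mathcal{X}$ is efficient if there is no $x\in\mathcal{X}$ with $f(x)\le f(x^* )$ and $f(x)\ne f(x^* )$; weakly efficient if there is no $x\in\mathcal{X}$ with $f(x)<f(x^* )$ (all components strict); strictly efficient if there is no $x\in\mathcal{X}$, $x\neq x^*$, with $f(x)\le f(x^* )$. For $\epsilon\ge0$, $x^*$ is weakly $\epsilon$-efficient if there is no $x\in\mathcal{X}$ with $f(x)<f(x^* )-\epsilon\mathbb{1}$, where $\mathbb{1}$ is the all-ones vector. *)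

From HB Require Import structures.
From mathcomp Require Import all_boot all_order all_algebra.
Set Implicit Arguments. Unset Strict Implicit. Unset Printing Implicit Defensive.
Import Order.TTheory GRing.Theory Num.Theory.
Local Open Scope ring_scope.

Section Defs.
Variable R : realFieldType.

Definition leV (p : nat) (u v : 'cV[R]_p) : Prop := forall i, u i 0 <= v i 0.
Definition ltV (p : nat) (u v : 'cV[R]_p) : Prop := forall i, u i 0 < v i 0.

Definition ones (p : nat) : 'cV[R]_p := const_mx 1.

Definition weakly_eps_efficient (T : Type) (p : nat) (X : T -> Prop)
  (f : T -> 'cV[R]_p) (eps : R) (x : T) : Prop :=
  X x /\ ~ (exists y, X y /\ ltV (f y) (f x - eps *: ones p)).

Variables (k m n : nat) (Ac Ad : 'M[R]_(m, n)) (bc bd : 'cV[R]_m)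
  (G : 'M[R]_(k, n)) (l u : 'cV[R]_n).

Definition qcqp_feasible (x : 'cV[R]_n * 'cV[R]_n * R) : Prop :=
  let: (xp, xm, r) := x in
  leV 0 xp /\ leV 0 xm /\ 0 <= r /\ r <= 1 /\
  leV (Ac *m xp - Ac *m xm + r *: (Ad *m xp) + r *: (Ad *m xm) + r *: bd - bc) 0 /\
  leV l (xp - xm) /\ leV (xp - xm) u.

Definition qcqp_obj (x : 'cV[R]_n * 'cV[R]_n * R) : 'cV[R]_(k + 1) :=
  let: (xp, xm, r) := x in col_mx (G *m (xp - xm)) (const_mx (- r)).

Definition lp_feasible (r : R) (x : 'cV[R]_n * 'cV[R]_n) : Prop :=
  let: (xp, xm) := x in
  leV 0 xp /\ leV 0 xm /\
  leV ((Ac + r *: Ad) *m xp - (Ac - r *: Ad) *m xm) (bc - r *: bd) /\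
  leV l (xp - xm) /\ leV (xp - xm) u.

Definition lp_obj (x : 'cV[R]_n * 'cV[R]_n) : 'cV[R]_k :=
  let: (xp, xm) := x in G *m (xp - xm).

(* SDP relaxation: Z of size 2n+2 = (n+n).+2, blocks of sizes 1, n, n, 1:
   index 0, indices 1..n, indices n+1..2n, index 2n+1 (= ord_max). *)
Definition sdp_zp (Z : 'M[R]_((n + n).+2)) : 'cV[R]_n :=
  \col_(i < n) Z ord0 (inord (1 + i)).
Definition sdp_zm (Z : 'M[R]_((n + n).+2)) : 'cV[R]_n :=
  \col_(i < n) Z ord0 (inord (1 + n + i)).
Definition sdp_rho (Z : 'M[R]_((n + n).+2)) : R := Z ord0 ord_max.
Definition sdp_wp (Z : 'M[R]_((n + n).+2)) : 'cV[R]_n :=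
  \col_(i < n) Z (inord (1 + i)) ord_max.
Definition sdp_wm (Z : 'M[R]_((n + n).+2)) : 'cV[R]_n :=
  \col_(i < n) Z (inord (1 + n + i)) ord_max.
Definition sdp_sigma (Z : 'M[R]_((n + n).+2)) : R := Z ord_max ord_max.

Definition psd (N : nat) (Z : 'M[R]_N) : Prop :=
  Z^T = Z /\ forall v : 'cV[R]_N, 0 <= (v^T *m Z *m v) 0 0.

Definition sdp_feasible (Z : 'M[R]_((n + n).+2)) : Prop :=
  psd Z /\ Z ord0 ord0 = 1 /\
  leV (Ac *m sdp_zp Z - Ac *m sdp_zm Z + Ad *m (sdp_wp Z + sdp_wm Z)
       + sdp_rho Z *: bd - bc) 0 /\
  leV l (sdp_zp Z - sdp_zm Z) /\ leV (sdp_zp Z - sdp_zm Z) u /\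
  leV 0 (sdp_zp Z) /\ leV 0 (sdp_zm Z) /\ 0 <= sdp_rho Z /\
  leV 0 (sdp_wp Z) /\ leV 0 (sdp_wm Z) /\ sdp_sigma Z <= 1.

Definition rQ_admissible (Z : 'M[R]_((n + n).+2)) (r : R) : Prop :=
  0 <= r /\ r <= 1 /\
  leV (r *: (Ad *m sdp_zp Z + Ad *m sdp_zm Z + bd)
       + Ac *m sdp_zp Z - Ac *m sdp_zm Z - bc) 0.

Definition is_rQ (Z : 'M[R]_((n + n).+2)) (rq : R) : Prop :=
  rQ_admissible Z rq /\ forall r, rQ_admissible Z r -> r <= rq.

End Defs.

(* A QCQP point (y+, y-, r) dominating (z+, z-, r^Q) by more than eps must have
   r > r^Q + eps >= r^Q, and must dominate in the first k objectives as well.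
   Since A_delta >= 0 and b_delta >= 0, the constraint of the LP of level r is
   monotone in r, so (y+, y-) is feasible for the LP of level r^Q; this
   contradicts the weak eps-efficiency of (z+, z-) for that LP. *)
From HB Require Import structures.
From mathcomp Require Import all_boot all_order all_algebra.
From mathcomp Require Import ring lra.
Set Implicit Arguments. Unset Strict Implicit. Unset Printing Implicit Defensive.
Import Order.TTheory GRing.Theory Num.Theory.
Local Open Scope ring_scope.

Section VectorOrder.
Variable R : realFieldType.

Lemma leV_sub0 (p : nat) (v w : 'cV[R]_p) : leV v w <-> leV (v - w) 0.
Proof.
by split=> vw i; have := vw i; rewrite !mxE subr_le0.
Qed.

Lemma mulmx_ge0 (m n : nat) (A : 'M[R]_(m, n)) (x : 'cV[R]_n) :
  (forall i j, 0 <= A i j) -> leV 0 x -> leV 0 (A *m x).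
Proof.
move=> A_ge0 x_ge0 i; rewrite !mxE; apply: sumr_ge0 => j _.
by apply: mulr_ge0 => //; have := x_ge0 j; rewrite mxE.
Qed.

Lemma ltV_col_mx (p q : nat) (a c : 'cV[R]_p) (b d : 'cV[R]_q) :
  ltV (col_mx a b) (col_mx c d) <-> ltV a c /\ ltV b d.
Proof.
split=> [lt_ac_bd | [lt_ac lt_bd] i].
  split=> i; [have := lt_ac_bd (lshift q i) | have := lt_ac_bd (rshift p i)].
    by rewrite !col_mxEu.
  by rewrite !col_mxEd.
rewrite -(splitK i); case: (fintype.split i) => j /=.
  by rewrite !col_mxEu.
by rewrite !col_mxEd.
Qed.

Lemma col_mx_subr_ones (p q : nat) (c : 'cV[R]_p) (d : 'cV[R]_q) (eps : R) :
  col_mx c d - eps *: ones R (p + q) = col_mx (c - eps *: ones R p) (d - eps *: ones R q).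
Proof. by rewrite /ones -col_mx_const scale_col_mx opp_col_mx add_col_mx. Qed.

End VectorOrder.

Section RobustLP.
Variables (R : realFieldType) (k m n : nat) (Ac Ad : 'M[R]_(m, n))
  (bc bd : 'cV[R]_m) (G : 'M[R]_(k, n)) (l u : 'cV[R]_n).

Lemma lp_slackE (r : R) (xp xm : 'cV[R]_n) :
  (Ac + r *: Ad) *m xp - (Ac - r *: Ad) *m xm - (bc - r *: bd)
  = Ac *m xp - Ac *m xm + r *: (Ad *m xp) + r *: (Ad *m xm) + r *: bd - bc.
Proof.
rewrite mulmxDl mulmxBl -!scalemxAl.
apply/matrixP=> i j; rewrite !mxE; ring.
Qed.

Lemma qcqp_feasibleP (xp xm : 'cV[R]_n) (r : R) :
  qcqp_feasible Ac Ad bc bd l u (xp, xm, r) <->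
  [/\ 0 <= r, r <= 1 & lp_feasible Ac Ad bc bd l u r (xp, xm)].
Proof.
have := leV_sub0 ((Ac + r *: Ad) *m xp - (Ac - r *: Ad) *m xm) (bc - r *: bd).
rewrite lp_slackE /qcqp_feasible /lp_feasible /= => slack.
split=> [[xp0 [xm0 [r0 [r1 [/slack sl lu]]]]] | [r0 r1 [xp0 [xm0 [/slack sl lu]]]]].
  by split.
exact: conj xp0 (conj xm0 (conj r0 (conj r1 (conj sl lu)))).
Qed.

Lemma qcqp_obj_dominates (eps : R) (yp ym xp xm : 'cV[R]_n) (r s : R) :
  ltV (qcqp_obj G (yp, ym, r)) (qcqp_obj G (xp, xm, s) - eps *: ones R (k + 1)) <->
  ltV (lp_obj G (yp, ym)) (lp_obj G (xp, xm) - eps *: ones R k) /\ s + eps < r.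
Proof.
rewrite /qcqp_obj col_mx_subr_ones ltV_col_mx.
have -> : ltV (const_mx (- r)) (const_mx (- s) - eps *: ones R 1) <-> s + eps < r.
  by split=> [/(_ ord0) | ? ?]; rewrite !mxE; lra.
by [].
Qed.

Hypotheses (Ad_ge0 : forall i j, 0 <= Ad i j) (bd_ge0 : leV 0 bd).

Lemma lp_feasible_antitone (r1 r2 : R) (x : 'cV[R]_n * 'cV[R]_n) :
  r1 <= r2 -> lp_feasible Ac Ad bc bd l u r2 x -> lp_feasible Ac Ad bc bd l u r1 x.
Proof.
case: x => xp xm le_r [xp_ge0 [xm_ge0 [slack [lx xu]]]].
do 2 split=> //; split=> //.
apply/leV_sub0 => i; move/leV_sub0: slack; rewrite !lp_slackE => /(_ i).
have := mulmx_ge0 Ad_ge0 xp_ge0 i; have := mulmx_ge0 Ad_ge0 xm_ge0 i.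
have := bd_ge0 i; rewrite !mxE => bd_i Adxm Adxp slack_i.
have := ler_wpM2r Adxp le_r; have := ler_wpM2r Adxm le_r.
have := ler_wpM2r bd_i le_r; lra.
Qed.

End RobustLP.

Theorem mainTheorem2 (R : realFieldType) (k m n : nat)
  (Ac Ad : 'M[R]_(m, n)) (bc bd : 'cV[R]_m) (G : 'M[R]_(k, n))
  (l u : 'cV[R]_n) (eps : R) (Z : 'M[R]_((n + n).+2)) (rq : R) :
  (forall i j, 0 <= Ad i j) -> leV 0 bd -> leV l u -> 0 <= eps ->
  sdp_feasible Ac Ad bc bd l u Z ->
  is_rQ Ac Ad bc bd Z rq ->
  weakly_eps_efficient (lp_feasible Ac Ad bc bd l u rq) (lp_obj G) eps
    (sdp_zp Z, sdp_zm Z) ->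
  weakly_eps_efficient (qcqp_feasible Ac Ad bc bd l u) (qcqp_obj G) eps
    (sdp_zp Z, sdp_zm Z, rq).
Proof.
move=> Ad_ge0 bd_ge0 _ eps_ge0 _ [[rq_ge0 [rq_le1 _]] _] [lpZ lp_eff].
split; first exact/qcqp_feasibleP.
case=> [[[yp ym] r] [/qcqp_feasibleP [_ _ lpY] /qcqp_obj_dominates [ltG lt_r]]].
apply: lp_eff; exists (yp, ym); split=> //.
by apply: lp_feasible_antitone lpY => //; lra.
Qed.
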